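(* Let $K\in\mathbb R^{m\times L(m+r)}$ and consider the closed loop $v(t+1)=(\Theta+\Pi K)v(t)$, $t\ge L$. Then $v(t)\to0$ as $t\to\infty$ for every realization of $v(L)\sim\mathcal N_\Phi$ if and only if $P^\top(\Theta+\Pi K)P$ is Schur.
   Context: System $\Sigma_s$: $x(t+1)=Ax(t)+Bu(t)$, $y(t)=Cx(t)$, $t\ge0$, $x\in\mathbb R^n,u\in\mathbb R^m,y\in\mathbb R^r$; standing assumptions: $(A,B,C)$ minimal, $A$ Schur. $\mathcal R_L=[A^{L-1}B,\dots,B]$, $\mathcal O_L=[C^\top,\dots,(CA^{L-1})^\top]^\top$, $\mathcal H_L$ the $Lr\times Lm$ block lower-triangular Toeplitz matrix with $(i,j)$ block $H_{i-j}$, $H_0=0$, $H_k=CA^{k-1}B$. Fix $L$ with $\operatorname{rank}\mathcal O_L=n$. $\Gamma=[\mathcal R_L-A^L\mathcal O_L^\dagger\mathcal H_L,\ A^L\mathcal O_L^\dagger]$; $\Theta=\mathrm{diag}(S_m,S_r)+EC\Gamma\in\mathbb R^{L(m+r)\times L(m+r)}$, with $S_k$ the $Lk\times Lk$ block matrix having $I_k$ in blocks $(i,i+1)$, $i<L$, zeros elsewhere, $E$ having $I_r$ in its last $r$ rows, zeros elsewhere; $\Pi\in\mathbb R^{L(m+r)\times m}$ has $I_m$ in rows $(L-1)m+1,\dots,Lm$, zeros elsewhere. (This is the dynamics of the IOH $v(t)=[u(t-L)^\top,\dots,u(t-1)^\top,y(t-L)^\top,\dots,y(t-1)^\top]^\top$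 of $\Sigma_s$ with $y=C\Gamma v$.) $\mathscr P=\mathrm{im}[\Theta^{L(m+r)-1}\Pi,\dots,\Pi]$; $P\in\mathbb R^{L(m+r)\times(Lm+n)}$ satisfies $\mathrm{im}P=\mathscr P$, $P^\top P=I$. $\Phi\ge0$ with $\mathrm{im}\Phi=\mathscr P$; $\mathcal N_\Phi$ is a Gaussian distribution with second moment about zero equal to $\Phi$. *)

From HB Require Import structures.
From mathcomp Require Import all_boot all_order all_algebra.
From mathcomp Require Import all_classical all_reals all_analysis.
From mathcomp Require Import complex.
Set Implicit Arguments. Unset Strict Implicit. Unset Printing Implicit Defensive.
Import Order.TTheory GRing.Theory Num.Theory.
Local Open Scope ring_scope.

Section Defs.
Variable R : realType.

Lemma blk_mod_lt (L k : nat) (i : 'I_(L * k)) : (i %% k < k)%N.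
Proof.
have h := ltn_ord i; move: h; move: (nat_of_ord i) => j.
case: k {i} => [|k]; last by rewrite ltn_mod.
by rewrite muln0.
Qed.
Definition blk_off (L k : nat) (i : 'I_(L * k)) : 'I_k := Ordinal (blk_mod_lt i).
Definition blk_num (L k : nat) (i : 'I_(L * k)) : nat := (i %/ k)%N.

(* R_L = [A^{L-1}B, ..., AB, B] *)
Definition ctrb_mx (n m L : nat) (A : 'M[R]_n) (B : 'M[R]_(n, m)) : 'M[R]_(n, L * m) :=
  \matrix_(i < n, k < L * m) (A ^+ (L - 1 - blk_num k)%N *m B) i (blk_off k).

(* O_L = [C; CA; ...; CA^{L-1}] *)
Definition obs_mx (n r L : nat) (A : 'M[R]_n) (C : 'M[R]_(r, n)) : 'M[R]_(L * r, n) :=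
  \matrix_(i < L * r, j < n) (C *m A ^+ (blk_num i)) (blk_off i) j.

(* H_L: block lower-triangular Toeplitz with (i,j) block H_{i-j}, H_0 = 0, H_k = C A^{k-1} B *)
Definition toep_mx (n m r L : nat) (A : 'M[R]_n) (B : 'M[R]_(n, m)) (C : 'M[R]_(r, n))
  : 'M[R]_(L * r, L * m) :=
  \matrix_(i < L * r, k < L * m)
    (if (blk_num k < blk_num i)%N
     then (C *m A ^+ (blk_num i - blk_num k - 1)%N *m B) (blk_off i) (blk_off k)
     else 0).

Definition pinv_fcr (p q : nat) (O : 'M[R]_(p, q)) : 'M[R]_(q, p) :=
  invmx (O^T *m O) *m O^T.

Definition Gamma_mx (n m r L : nat) (A : 'M[R]_n) (B : 'M[R]_(n, m)) (C : 'M[R]_(r, n))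
  : 'M[R]_(n, L * m + L * r) :=
  row_mx (ctrb_mx L A B - A ^+ L *m pinv_fcr (obs_mx L A C) *m toep_mx L A B C)
         (A ^+ L *m pinv_fcr (obs_mx L A C)).

(* S_k: I_k in blocks (i, i+1) *)
Definition shift_mx (L k : nat) : 'M[R]_(L * k) :=
  \matrix_(a < L * k, b < L * k) (b == (a + k)%N :> nat)%:R.

Definition E_mx (m r L : nat) : 'M[R]_(L * m + L * r, r) :=
  \matrix_(a < L * m + L * r, j < r) (a == (L * m + L * r - r + j)%N :> nat)%:R.

Definition Pi_mx (m r L : nat) : 'M[R]_(L * m + L * r, m) :=
  \matrix_(a < L * m + L * r, j < m) (a == ((L - 1) * m + j)%N :> nat)%:R.

Definition Theta_mx (n m r L : nat) (A : 'M[R]_n) (B : 'M[R]_(n, m)) (C : 'M[R]_(r, n))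
  : 'M[R]_(L * m + L * r) :=
  block_mx (shift_mx L m) 0 0 (shift_mx L r) + E_mx m r L *m C *m Gamma_mx L A B C.

(* [Theta^{N-1} Pi, ..., Theta Pi, Pi] with N = L(m+r) *)
Definition krylov_mx (N m : nat) (T : 'M[R]_N) (Pi : 'M[R]_(N, m)) : 'M[R]_(N, N * m) :=
  \matrix_(a < N, k < N * m) (T ^+ (N - 1 - blk_num k)%N *m Pi) a (blk_off k).

(* equality of column spaces (im) *)
Definition same_im (p q1 q2 : nat) (M1 : 'M[R]_(p, q1)) (M2 : 'M[R]_(p, q2)) : bool :=
  (M1^T == M2^T)%MS.

Definition schur (p : nat) (M : 'M[R]_p) : Prop :=
  forall z : R[i], root (char_poly (map_mx (real_complex R) M)) z -> `|z| < 1.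

Definition minimal (n m r : nat) (A : 'M[R]_n) (B : 'M[R]_(n, m)) (C : 'M[R]_(r, n)) : Prop :=
  \rank (ctrb_mx n A B) = n /\ \rank (obs_mx n A C) = n.

Definition psd (p : nat) (M : 'M[R]_p) : Prop :=
  M^T = M /\ forall x : 'cV[R]_p, 0 <= (x^T *m M *m x) 0 0.

(* realizations of N_Phi (zero mean, second moment Phi): values F w of a
   linear image of a standard Gaussian w, with F F^T = Phi *)
Definition gauss_realizations (p : nat) (Phi : 'M[R]_p) : set 'cV[R]_p :=
  [set x | exists (F : 'M[R]_p) (w : 'cV[R]_p), F *m F^T = Phi /\ x = F *m w].

End Defs.

(* The Krylov space im P is invariant under Theta + Pi K: by
   Cayley-Hamilton it contains every Theta^j Pi, and Pi K maps into im Pi.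
   Hence (Theta + Pi K) P = P X with X = P^T (Theta + Pi K) P.  The realizations
   F w of N_Phi (F F^T = Phi) are exactly the vectors of im Phi = im P (for the
   inclusion of im P take a Cholesky factor F of Phi), so the closed-loop
   trajectories started at realizations are v (L + t) = P X^t z, and they all
   tend to 0 iff X^t tends to 0.  Finally X^t -> 0 iff every eigenvalue of X has
   modulus < 1: an eigenvector of an eigenvalue of modulus >= 1 does not decay,
   and conversely, peeling off the linear factors of the characteristic
   polynomial of X one at a time, each factor only costs a contraction by a
   factor of modulus < 1. *)

From HB Require Import structures.
From mathcomp Require Import all_boot all_order all_algebra.
From mathcomp Require Import all_classical all_reals all_analysis.
From mathcomp Require Import complex.
From mathcomp Require Import ring lra zify.
Import Order.TTheory GRing.Theory Num.Theory.
Import numFieldNormedType.Exports.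
Local Open Scope ring_scope.
Local Open Scope classical_set_scope.
Set Implicit Arguments. Unset Strict Implicit. Unset Printing Implicit Defensive.

Section Convergence.
Variable R : realType.

Lemma cvg0_sum (I : finType) (f : I -> nat -> R) :
  (forall i, f i @ \oo --> 0) -> (fun t => \sum_i f i t) @ \oo --> 0.
Proof.
move=> f0; have := @cvg_big _ _ _ 0 predT add_continuous _ _ (index_enum I) _ _ _ (fun i _ => f0 i).
by rewrite big1 //; apply; exact: filter_on_Filter.
Qed.

Lemma cvg0_mulmx p q s k (Q : 'M[R]_(p, q)) (Y : nat -> 'M[R]_(q, s)) (S : 'M[R]_(s, k)) :
  (forall i j, (fun t => Y t i j) @ \oo --> 0) ->
  forall i j, (fun t => (Q *m Y t *m S) i j) @ \oo --> 0.
Proof.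
move=> Y0 i j; under eq_fun do rewrite mxE.
apply: cvg0_sum => l; under eq_fun do rewrite mxE big_distrl /=.
apply: cvg0_sum => a; rewrite -(mul0r (S l j)) -(mulr0 (Q i a)).
by apply: cvgMr_tmp; apply: cvgMl_tmp; apply: Y0.
Qed.

Lemma cvg0_contraction (rho : R) (a b : nat -> R) :
  0 <= rho < 1 -> (forall t, 0 <= a t) -> (forall t, a t.+1 <= rho * a t + b t) ->
  b @ \oo --> 0 -> a @ \oo --> 0.
Proof.
move=> /andP[rho0 rho1] a0 ab b0; apply/cvgr0Pnorm_lt => e e0.
have e20 : 0 < e / 2 by rewrite divr_gt0.
have rho_gap : 0 < 1 - rho by rewrite subr_gt0.
have [N _ bN] := cvgr0_norm_le _ b0 _ (mulr_gt0 e20 rho_gap).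
(* a t - e/2 contracts by rho once b t <= (1 - rho) e/2 *)
have decay k : a (N + k)%N - e / 2 <= rho ^+ k * (a N - e / 2).
  elim: k => [|k IHk]; first by rewrite addn0 expr0 mul1r.
  rewrite addnS exprS -mulrA; apply: (le_trans _ (ler_wpM2l rho0 IHk)).
  have := le_trans (ler_norm _) (bN (N + k)%N (leq_addr _ _)).
  by have := ab (N + k)%N; lra.
have geo : (fun k => rho ^+ k * a N) @ \oo --> 0.
  by rewrite -(mul0r (a N)); apply: cvgMr_tmp; apply: cvg_expr; rewrite ger0_norm.
have [M _ geoM] := cvgr0_norm_lt _ geo _ e20.
exists (N + M)%N => // t NMt; rewrite ger0_norm //.
have /subnKC <- : (N <= t)%N by apply: leq_trans (leq_addr _ _) NMt.
have /geoM : (M <= t - N)%N by move: NMt => /=; lia.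
rewrite ger0_norm ?mulr_ge0 ?exprn_ge0 //.
have := decay (t - N)%N; have : 0 <= rho ^+ (t - N) * (e / 2) by rewrite mulr_ge0 ?exprn_ge0 // ltW.
by rewrite mulrBr; lra.
Qed.
End Convergence.

Section SchurPowers.
Variable R : realType.
Local Notation normc := (@Normc.normc R).
Local Open Scope complex_scope.

Lemma normc_ge0 (z : R[i]) : 0 <= normc z.
Proof. by case: z => a b; rewrite /= sqrtr_ge0. Qed.

Lemma normc_real (x : R) : normc x%:C = `|x|.
Proof. by rewrite /= expr0n /= addr0 sqrtr_sqr. Qed.

Lemma normcE (z : R[i]) : `|z| = (normc z)%:C.
Proof. by case: z. Qed.

Lemma cvg0_expr_factor p (Y Q : 'M[R[i]]_p.+1) (z : R[i]) : normc z < 1 ->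
  (forall i j, (fun t => normc ((Y ^+ t * ((Y - z%:M) * Q)) i j)) @ \oo --> 0) ->
  forall i j, (fun t => normc ((Y ^+ t * Q) i j)) @ \oo --> 0.
Proof.
move=> z1 YQ0 i j.
apply: (@cvg0_contraction R (normc z) _ _ _ (fun=> normc_ge0 _) _ (YQ0 i j)).
  by rewrite normc_ge0.
move=> t; have -> : Y ^+ t.+1 * Q = z *: (Y ^+ t * Q) + Y ^+ t * ((Y - z%:M) * Q).
  by rewrite mulrBl mulrBr mulrA -exprSr -mulmxE mul_scalar_mx -scalemxAr addrC subrK.
rewrite mxE [X in X + _]mxE -Normc.normcM; exact: le_normcD.
Qed.

Lemma cvg0_expr_prod p (Y : 'M[R[i]]_p.+1) (zs : seq R[i]) :
  (forall z, z \in zs -> normc z < 1) ->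
  (forall i j, (fun t => normc ((Y ^+ t * \prod_(z <- zs) (Y - z%:M)) i j)) @ \oo --> 0) ->
  forall i j, (fun t => normc ((Y ^+ t) i j)) @ \oo --> 0.
Proof.
elim: zs => [|z zs IHzs] zs1 Y0.
  by move=> i j; have := Y0 i j; rewrite big_nil; under eq_fun do rewrite mulr1.
apply: IHzs => [w wzs|]; first by apply: zs1; rewrite inE wzs orbT.
apply: cvg0_expr_factor (zs1 _ (mem_head _ _)) _ => i j.
by have := Y0 i j; rewrite big_cons.
Qed.

Lemma schur_expr_cvg0 p (X : 'M[R]_p) :
  schur X -> forall i j, (fun t => (X ^+ t) i j) @ \oo --> 0.
Proof.
case: p X => [|p] X HX i j; first by case: i.
set Y := map_mx (real_complex R) X.
have [zs Yzs] := closed_field_poly_normal (char_poly Y).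
rewrite (monicP (char_poly_monic Y)) scale1r in Yzs.
have zs1 z : z \in zs -> normc z < 1.
  by move=> zzs; have := HX z; rewrite -/Y Yzs root_prod_XsubC normcE ltcR; apply.
have Y_annihilated : \prod_(z <- zs) (Y - z%:M) = 0.
  rewrite -(Cayley_Hamilton Y) Yzs rmorph_prod; apply: eq_bigr => z _.
  by rewrite rmorphB /= horner_mx_X horner_mx_C.
suff /(_ i j) : forall i j, (fun t => normc ((Y ^+ t) i j)) @ \oo --> 0.
  by under eq_fun do rewrite -rmorphXn mxE normc_real; move/norm_cvg0P.
apply: cvg0_expr_prod zs1 _ => i' j'; rewrite Y_annihilated.
by under eq_fun do rewrite mulr0 mxE normc_real normr0; apply: cvg_cst.
Qed.

Lemma expr_cvg0_schur p (X : 'M[R]_p) :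
  (forall i j, (fun t => (X ^+ t) i j) @ \oo --> 0) -> schur X.
Proof.
move=> X0 z; rewrite -eigenvalue_root_char => /eigenvalueP [v vY v_neq0].
rewrite normcE -(rmorph1 (real_complex R)) ltcR ltNge; apply/negP => z_ge1.
have vYt t : v *m map_mx (real_complex R) (X ^+ t) = z ^+ t *: v.
  elim: t => [|t IHt]; first by rewrite expr0 map_mx1 mulmx1 scale1r.
  by rewrite exprSr -mulmxE map_mxM mulmxA IHt -scalemxAl vY scalerA -exprSr.
suff v0 : v = 0 by rewrite v0 eqxx in v_neq0.
apply/rowP => l; rewrite mxE; apply/Normc.eq0_normc/eqP.
rewrite eq_le normc_ge0 andbT.
pose S t := \sum_j normc (v 0 j) * `|(X ^+ t) j l|.
have S0 : S @ \oo --> 0.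
  apply: cvg0_sum => j; rewrite -(mulr0 (normc (v 0 j))).
  by apply: cvgMl_tmp; apply/norm_cvg0P.
apply: (ler_cvg_to (cvg_cst _) S0); apply: filterE => t /=.
have zt_ge1 : 1 <= normc z ^+ t by rewrite exprn_ege1.
apply: le_trans (ler_peMl (normc_ge0 _) zt_ge1) _.
rewrite -lecR rmorphM rmorphXn /= -!normcE -normrX -normrM.
have -> : z ^+ t * v 0 l = (v *m map_mx (real_complex R) (X ^+ t)) 0 l by rewrite vYt mxE.
rewrite mxE rmorph_sum /=.
apply: le_trans (ler_norm_sum _ _ _) _; apply: ler_sum => j _.
by rewrite mxE normrM rmorphM /= -normcE [w in _ * w <= _]normcE normc_real.
Qed.

Lemma schurP p (X : 'M[R]_p) :
  schur X <-> forall i j, (fun t => (X ^+ t) i j) @ \oo --> 0.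
Proof. by split; [exact: schur_expr_cvg0 | exact: expr_cvg0_schur]. Qed.
End SchurPowers.

Lemma expr_in_lower_powers (F : fieldType) N (T : 'M[F]_N) j :
  exists c : 'I_N -> F, T ^+ j = \sum_(i < N) c i *: T ^+ i.
Proof.
case: N T => [|N] T; first by exists (fun=> 0); apply/matrixP => -[].
pose r := 'X^j %% char_poly T.
have r_small : (size r <= N.+1)%N.
  by rewrite -ltnS -(size_char_poly T) ltn_modp -size_poly_eq0 size_char_poly.
exists (fun i => r`_i).
have -> : T ^+ j = horner_mx T r.
  rewrite -[in LHS](horner_mx_X T) -rmorphXn /= (divp_eq 'X^j (char_poly T)).
  by rewrite rmorphD rmorphM /= Cayley_Hamilton mulr0 add0r.
rewrite /horner_mx /horner_morph (horner_coef_wide (n := N.+1)) ?size_map_poly //.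
by apply: eq_bigr => i _; rewrite coef_map /= -mulmxE mul_scalar_mx.
Qed.

Section Krylov.
Variables (R : realType) (N m : nat) (T : 'M[R]_N) (Pi : 'M[R]_(N, m)).
Local Notation Kr := (krylov_mx T Pi).

Lemma row_krylov (c : 'I_(N * m)) :
  row c Kr^T = row (blk_off c) (T ^+ (N - 1 - blk_num c) *m Pi)^T.
Proof. by apply/rowP => k; rewrite !mxE. Qed.

Lemma krylov_lt_sub j : (j < N)%N -> ((T ^+ j *m Pi)^T <= Kr^T)%MS.
Proof.
move=> jN; apply/row_subP => o.
have c_lt : ((N - 1 - j) * m + o < N * m)%N.
  apply: (@leq_trans ((N - 1 - j) * m + m)); first by rewrite ltn_add2l.
  by rewrite -mulSnr leq_mul2r; apply/orP; right; lia.
pose c := Ordinal c_lt.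
have c_num : blk_num c = (N - 1 - j)%N.
  by rewrite /blk_num /= divnMDl ?divn_small ?addn0 //; case: m o {c_lt c} => [[]|].
have c_off : blk_off c = o by apply: val_inj; rewrite /= modnMDl modn_small.
rewrite (_ : row o _ = row c Kr^T); first exact: row_sub.
by rewrite row_krylov c_num c_off; congr (row o (T ^+ _ *m Pi)^T); lia.
Qed.

Lemma krylov_sub j : ((T ^+ j *m Pi)^T <= Kr^T)%MS.
Proof.
have [c ->] := expr_in_lower_powers T j.
rewrite mulmx_suml linear_sum /=; apply: summx_sub => i _.
by rewrite -scalemxAl linearZ /=; apply/scalemx_sub/krylov_lt_sub.
Qed.

Lemma krylov_feedback_invariant (K : 'M[R]_(m, N)) :
  (((T + Pi *m K) *m Kr)^T <= Kr^T)%MS.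
Proof.
apply/row_subP => c; rewrite trmx_mul row_mul row_krylov -row_mul -trmx_mul.
rewrite mulmxDl mulmxA mulmxE -exprS !linearD /= addmx_sub //.
  exact: submx_trans (row_sub _ _) (krylov_sub _).
rewrite -!mulmxA trmx_mul; apply: submx_trans (row_sub _ _) (submx_trans (submxMl _ _) _).
by have := krylov_sub 0; rewrite expr0 mul1mx.
Qed.
End Krylov.

Lemma gram_eq0 (F : realDomainType) p q (G : 'M[F]_(p, q)) : G *m G^T = 0 -> G = 0.
Proof.
move=> GG0; apply/matrixP => i j; rewrite mxE.
have /eqP := congr1 (fun M : 'M[F]_p => M i i) GG0; rewrite !mxE psumr_eq0 => [|k _].
  by move=> /allP /(_ j (mem_index_enum _)); rewrite mxE -expr2 sqrf_eq0 => /eqP.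
by rewrite mxE -expr2 sqr_ge0.
Qed.

Section PositiveSemidefinite.
Variables (R : realType) (p : nat) (a : 'M[R]_1) (b : 'M[R]_(1, p)) (D : 'M[R]_p).
Hypothesis psd_blk : psd (block_mx a b b^T D).

Lemma psd_block_form (u : R) (y : 'cV[R]_p) :
  0 <= a 0 0 * u ^+ 2 + 2 * u * (b *m y) 0 0 + (y^T *m D *m y) 0 0.
Proof.
have := psd_blk.2 (col_mx u%:M y).
rewrite tr_col_mx tr_scalar_mx mul_row_block mul_row_col !mulmxDl !mul_scalar_mx.
rewrite -!scalemxAl !mul_mx_scalar -[y^T *m b^T]trmx_mul !mxE.
by congr (0 <= _); ring.
Qed.

Lemma psd_block_pivot0 : a 0 0 = 0 -> b = 0.
Proof.
move=> a0; apply: gram_eq0; apply/matrixP => i j; rewrite !ord1 [RHS]mxE.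
set s := (b *m b^T) 0 0; set q := (b *m D *m b^T) 0 0.
have := psd_block_form (- (q + 1) / (2 * s)) b^T.
rewrite a0 mul0r add0r trmxK -/s -/q.
have [->|s_neq0] := eqVneq s 0; first by [].
suff -> : 2 * (- (q + 1) / (2 * s)) * s + q = -1 by rewrite ler0N1.
by field.
Qed.

Lemma psd_schur_complement : psd (D - (a 0 0)^-1 *: (b^T *m b)).
Proof.
split.
  have := psd_blk.1; rewrite tr_block_mx trmxK => /eq_block_mx [_ _ _ DT].
  by rewrite linearB linearZ /= trmx_mul trmxK DT.
move=> x; rewrite mulmxBr mulmxBl -scalemxAr -scalemxAl.
have -> : x^T *m (b^T *m b) *m x = (b *m x)^T *m (b *m x) by rewrite trmx_mul !mulmxA.
have -> : forall (c : R) (q bx : 'cV[R]_1), (q - c *: (bx^T *m bx)) 0 0 = q 0 0 - c * bx 0 0 ^+ 2.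
  by move=> c q bx; rewrite !mxE big_ord1 !mxE expr2.
have [a0|a_neq0] := eqVneq (a 0 0) 0.
  by have := psd_block_form 0 x; rewrite a0 invr0 !(mul0r, mulr0, add0r, subr0).
have := psd_block_form (- (b *m x) 0 0 / a 0 0) x.
suff -> : a 0 0 * (- (b *m x) 0 0 / a 0 0) ^+ 2 + 2 * (- (b *m x) 0 0 / a 0 0) * (b *m x) 0 0
  = - ((a 0 0)^-1 * (b *m x) 0 0 ^+ 2) by rewrite addrC.
by field.
Qed.

Lemma psd_block_gram (F' : 'M[R]_p) : F' *m F'^T = D - (a 0 0)^-1 *: (b^T *m b) ->
  exists F : 'M[R]_(1 + p), F *m F^T = block_mx a b b^T D.
Proof.
move=> F'E; set s := Num.sqrt (a 0 0).
have a_ge0 : 0 <= a 0 0 by have := psd_block_form 1 0; rewrite !mulmx0 !mxE expr1n; lra.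
have s_b : (s * s^-1) *: b = b.
  have [a0|a_neq0] := eqVneq (a 0 0) 0; first by rewrite (psd_block_pivot0 a0) scaler0.
  by rewrite divff ?scale1r // sqrtr_eq0 -ltNge lt_def a_neq0.
exists (block_mx s%:M 0 (s^-1 *: b^T) F').
rewrite tr_block_mx mulmx_block !trmx0 !mulmx0 !addr0 F'E tr_scalar_mx.
congr block_mx.
- by rewrite -scalar_mxM -expr2 sqr_sqrtr // -mx11_scalar.
- by rewrite mul0mx addr0 linearZ /= trmxK mul_scalar_mx scalerA s_b.
- by rewrite mul_mx_scalar scalerA -linearZ /= s_b.
rewrite linearZ /= trmxK -scalemxAl -scalemxAr scalerA -invfM -expr2 sqr_sqrtr //.
by rewrite addrC subrK.
Qed.
End PositiveSemidefinite.

Lemma psd_gram (R : realType) p (Phi : 'M[R]_p) :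
  psd Phi -> exists F : 'M[R]_p, F *m F^T = Phi.
Proof.
elim: p Phi => [|p IHp] Phi psdPhi; first by exists 0; apply/matrixP => -[].
have [a [b [D PhiE]]] : exists a b D, Phi = block_mx a b b^T D :> 'M[R]_(1 + p).
  pose Q : 'M[R]_(1 + p) := Phi.
  exists (ulsubmx Q), (ursubmx Q), (drsubmx Q).
  by rewrite trmx_ursub [Q^T]psdPhi.1 submxK.
rewrite PhiE in psdPhi *.
have [F' /(psd_block_gram psdPhi) [F FE]] := IHp _ (psd_schur_complement psdPhi).
by exists F.
Qed.

Lemma orthonormal_proj (F : fieldType) p q k (P : 'M[F]_(p, q)) (Y : 'M[F]_(p, k)) :
  P^T *m P = 1%:M -> (Y^T <= P^T)%MS -> P *m (P^T *m Y) = Y.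
Proof.
move=> PP /submxP [E YE]; have -> : Y = P *m E^T by rewrite -[Y]trmxK YE trmx_mul trmxK.
by rewrite (mulmxA P^T) PP mul1mx.
Qed.

Lemma gauss_realizationsE (R : realType) p q (Phi : 'M[R]_p) (P : 'M[R]_(p, q)) :
  psd Phi -> P^T *m P = 1%:M -> same_im P Phi -> gauss_realizations Phi = range (mulmx P).
Proof.
move=> psdPhi PP /andP [P_Phi Phi_P]; rewrite eqEsubset; split => [_ [F [w [FF ->]]]|_ [z _ <-]].
  (* the projection Q onto the complement of im P annihilates Phi = F F^T, hence F *)
  pose Q := 1%:M - P *m P^T.
  have QPhi : Q *m Phi = 0.
    by rewrite mulmxBl mul1mx -mulmxA orthonormal_proj ?subrr.
  have QF : Q *m F = 0 by apply: gram_eq0; rewrite trmx_mul mulmxA -(mulmxA Q) FF QPhi mul0mx.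
  have /eqP : Q *m (F *m w) = 0 by rewrite mulmxA QF mul0mx.
  rewrite mulmxBl mul1mx subr_eq0 => /eqP Fw.
  by exists (P^T *m (F *m w)) => //; rewrite mulmxA -Fw.
have [F FF] := psd_gram psdPhi.
have [E PE] := submxP P_Phi.
exists F, (F^T *m (E^T *m z)); split => //.
by rewrite -[P]trmxK PE trmx_mul trmxK -FF !mulmxA.
Qed.

Lemma trajectory_expr (F : pzRingType) p (M : 'M[F]_p) (v : nat -> 'cV[F]_p) L :
  (forall t, (L <= t)%N -> v t.+1 = M *m v t) -> forall t, v (t + L)%N = M ^+ t *m v L.
Proof.
move=> vrec; elim=> [|t IHt]; first by rewrite expr0 mul1mx.
by rewrite addSn vrec ?leq_addl // IHt mulmxA mulmxE -exprS.
Qed.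

Lemma expr_intertwine (F : pzRingType) p q (M : 'M[F]_p) (P : 'M[F]_(p, q)) X :
  M *m P = P *m X -> forall t, M ^+ t *m P = P *m X ^+ t.
Proof.
move=> MP; elim=> [|t IHt]; first by rewrite !expr0 mul1mx mulmx1.
by rewrite exprS -mulmxE -mulmxA IHt mulmxA MP -mulmxA mulmxE -exprS.
Qed.

Lemma invariant_trajectories_cvg0P (R : realType) p q (M : 'M[R]_p) (P : 'M[R]_(p, q)) L :
  P^T *m P = 1%:M -> ((M *m P)^T <= P^T)%MS ->
  (forall x, range (mulmx P) x -> forall v : nat -> 'cV[R]_p, v L = x ->
     (forall t, (L <= t)%N -> v t.+1 = M *m v t) ->
     forall i, (fun t => v t i ord0) @ \oo --> 0)
  <-> schur (P^T *m M *m P).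
Proof.
move=> PP MP_sub; set X := P^T *m M *m P.
have MP : M *m P = P *m X by rewrite /X -mulmxA orthonormal_proj.
rewrite schurP; split => [traj0 i j|X0 _ [z _ <-] v vL vrec a].
  pose v t : 'cV[R]_p := M ^+ (t - L) *m (P *m delta_mx j 0).
  have vrec t : (L <= t)%N -> v t.+1 = M *m v t.
    by move=> Lt; rewrite /v subSn // exprS -mulmxE -mulmxA.
  have vL : v L = P *m delta_mx j 0 by rewrite /v subnn expr0 mul1mx.
  have XvE t : (X ^+ t) i j = (P^T *m v (t + L)%N *m 1%:M) i 0.
    rewrite mulmx1 /v addnK (mulmxA (M ^+ t)) (expr_intertwine MP).
    by rewrite (mulmxA P^T) (mulmxA P^T) PP mul1mx -colE mxE.
  under eq_fun do rewrite XvE.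
  apply: cvg0_mulmx => a b; rewrite ord1.
  by have := traj0 _ (ex_intro2 _ _ _ I erefl) v vL vrec a; rewrite -(cvg_shiftn L).
rewrite -(cvg_shiftn L).
under eq_fun do rewrite (trajectory_expr vrec) vL mulmxA (expr_intertwine MP).
exact: cvg0_mulmx.
Qed.

Theorem lemma4 (R : realType) (n m r L : nat)
  (A : 'M[R]_n) (B : 'M[R]_(n, m)) (C : 'M[R]_(r, n))
  (Hmin : minimal A B C) (HA : schur A)
  (HL : \rank (obs_mx L A C) = n)
  (P : 'M[R]_(L * m + L * r, L * m + n))
  (HPim : same_im P (krylov_mx (Theta_mx L A B C) (Pi_mx R m r L)))
  (HPorth : P^T *m P = 1%:M)
  (Phi : 'M[R]_(L * m + L * r))
  (HPhi : psd Phi)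
  (HPhiim : same_im Phi (krylov_mx (Theta_mx L A B C) (Pi_mx R m r L)))
  (K : 'M[R]_(m, L * m + L * r)) :
  (forall x, gauss_realizations Phi x ->
     forall v : nat -> 'cV[R]_(L * m + L * r),
       v L = x ->
       (forall t, (L <= t)%N -> v t.+1 = (Theta_mx L A B C + Pi_mx R m r L *m K) *m v t) ->
       forall i, (fun t => v t i ord0) @ \oo --> (0 : R))
  <-> schur (P^T *m (Theta_mx L A B C + Pi_mx R m r L *m K) *m P).
Proof.
move: HPim HPhiim => /andP [P_Kr Kr_P] /andP [Phi_Kr Kr_Phi].
have P_Phi : same_im P Phi.
  by apply/andP; split; [exact: submx_trans P_Kr Kr_Phi | exact: submx_trans Phi_Kr Kr_P].
rewrite (gauss_realizationsE HPhi HPorth P_Phi).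
apply: invariant_trajectories_cvg0P HPorth _.
rewrite trmx_mul; apply: submx_trans (submxMr _ P_Kr) _.
by rewrite -trmx_mul; apply: submx_trans (krylov_feedback_invariant _ _ K) Kr_P.
Qed.
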